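(* Every vertex $v\in V$ belongs to at most $O(D\log n)$ of the sets $\mathsf{LDS}(x,y)$, taken over all independent pairs $(x,y)$.
   Context: $G=(V,E)$ is a connected $n$-vertex graph of diameter $D$ with no cut vertex, $T$ a BFS tree rooted at $s$, $\pi(u,v)$ the $T$-path, $T_x$ the subtree at $x$, $V_x=V(T_x)\setminus\{x\}$. The heavy child of a non-leaf vertex is the child with the largest subtree (ties broken consistently); other children are light. $\mathsf{LD}(x)$, the light descendants of $x$, is the union of $V(T_{x'})$ over light children $x'$ of $x$. $\mathcal{C}_x$ is the set of connected components of $G[V_x]$ and $C_{x,v}$ the one containing $v$. For each $C\in\mathcal{C}_x$ a fixed edge $(u_C,v_C)\in E$ with $v_C\in C$, $u_C\notin V(T_x)$ is chosen and $\pi_x(s,C)=\pi(s,u_C)\circ(u_C,v_C)$. A pair $x,y$ is independent if neither is a $T$-ancestor of the other. For an independent pair, $\mathsf{LDS}(x,y)=\{v\in\mathsf{LD}(x): y\in\pi_x(s,C_{x,v})\}$. *)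

From mathcomp Require Import all_boot.
Set Implicit Arguments. Unset Strict Implicit. Unset Printing Implicit Defensive.

(* Simple graph on the vertex type T (V = T, n = #|T|) with adjacency adj. *)
Definition simple_graph (T : finType) (adj : rel T) : Prop :=
  symmetric adj /\ irreflexive adj.

Definition connected_graph (T : finType) (adj : rel T) : Prop :=
  forall u v, connect adj u v.

Definition del_vertex (T : finType) (adj : rel T) (z : T) : rel T :=
  [rel a b | [&& adj a b, a != z & b != z]].

Definition no_cut_vertex (T : finType) (adj : rel T) : Prop :=
  forall z u w, u != z -> w != z -> connect (del_vertex adj z) u w.

Fixpoint within (T : finType) (adj : rel T) (k : nat) (u v : T) : bool :=
  if k is k'.+1 then (u == v) || [exists w, adj u w && within adj k' w v]
  else u == v.

(* graph distance (for connected graphs it is < #|T|) *)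
Definition dist (T : finType) (adj : rel T) (u v : T) : nat :=
  \big[minn/#|T|]_(k < #|T|.+1 | within adj k u v) k.

Definition diameter (T : finType) (adj : rel T) : nat :=
  \max_(u : T) \max_(v : T) dist adj u v.

(* par : parent function of a rooted spanning tree (par s = s).
   bfs_tree: par is the tree produced by a breadth-first search from s,
   where ord is the order in which vertices are discovered (enqueued):
   the parent of v is its earliest-discovered neighbour, which is
   discovered before v, and children of earlier-discovered parents are
   discovered earlier (FIFO queue). *)
Definition bfs_tree (T : finType) (adj : rel T) (s : T) (par : T -> T) : Prop :=
  par s = s /\
  exists ord : T -> nat,
    injective ord /\
    (forall v, v != s ->
       [/\ adj v (par v), ord (par v) < ord v &
           forall w, adj v w -> ord (par v) <= ord w]) /\
    (forall u w, u != s -> w != s -> ord (par u) < ord (par w) -> ord u < ord w).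

(* x is a T-ancestor of y (reflexive: x is an ancestor of itself) *)
Definition anc (T : finType) (par : T -> T) (x y : T) : bool := fconnect par y x.

Definition subtree (T : finType) (par : T -> T) (x : T) : {set T} :=
  [set y | anc par x y].

Definition Vx (T : finType) (par : T -> T) (x : T) : {set T} :=
  subtree par x :\ x.

Definition child (T : finType) (s : T) (par : T -> T) (c x : T) : bool :=
  (c != s) && (par c == x).

Definition heavy_choice (T : finType) (s : T) (par : T -> T) (h : T -> T) : Prop :=
  forall x c, child s par c x ->
    child s par (h x) x /\ #|subtree par c| <= #|subtree par (h x)|.

Definition LD (T : finType) (s : T) (par : T -> T) (h : T -> T) (x : T) : {set T} :=
  \bigcup_(c | child s par c x && (c != h x)) subtree par c.

Definition comp (T : finType) (adj : rel T) (par : T -> T) (x v : T) : {set T} :=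
  [set w | connect [rel a b | [&& adj a b, a \in Vx par x & b \in Vx par x]] v w].

(* ec x C = (u_C, v_C): the fixed edge for component C of G[V_x] *)
Definition edge_choice (T : finType) (adj : rel T) (s : T) (par : T -> T)
    (ec : T -> {set T} -> T * T) : Prop :=
  forall x v, x != s -> v \in Vx par x ->
    let C := comp adj par x v in
    [/\ adj (ec x C).1 (ec x C).2, (ec x C).2 \in C &
        (ec x C).1 \notin subtree par x].

(* vertex set of pi_x(s, C) = pi(s, u_C) o (u_C, v_C) *)
Definition on_pix (T : finType) (par : T -> T) (ec : T -> {set T} -> T * T)
    (x : T) (C : {set T}) (y : T) : bool :=
  anc par y (ec x C).1 || (y == (ec x C).2).

Definition independent (T : finType) (par : T -> T) (x y : T) : bool :=
  ~~ anc par x y && ~~ anc par y x.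

Definition LDS (T : finType) (adj : rel T) (s : T) (par : T -> T) (h : T -> T)
    (ec : T -> {set T} -> T * T) (x y : T) : {set T} :=
  [set v in LD s par h x | on_pix par ec x (comp adj par x v) y].

Definition LDS_count (T : finType) (adj : rel T) (s : T) (par : T -> T) (h : T -> T)
    (ec : T -> {set T} -> T * T) (v : T) : nat :=
  #|[set p : T * T | independent par p.1 p.2 && (v \in LDS adj s par h ec p.1 p.2)]|.

From Pilot Require Import Defs.
From mathcomp Require Import all_boot.
Set Implicit Arguments. Unset Strict Implicit. Unset Printing Implicit Defensive.

(* If v lies in LDS(x,y) then v is in LD(x), so x is the parent of a light child
   on the tree path from s to v.  A light child carries at most half of its
   parent's subtree, hence there are at most log2 n such x.  For each of them,
   a vertex y of pi_x(s, C_{x,v}) independent of x is neither the endpoint v_C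
   (a descendant of x) nor s (an ancestor of x), so it is one of the at most D
   vertices of pi(s, u_C) other than s: in a BFS tree the depth is monotone in
   discovery order, so it changes by at most one along an edge and the depth of
   u is at most dist(s, u) <= D. *)

Lemma fconnect_comparable (T : finType) (f : T -> T) z a b :
  fconnect f z a -> fconnect f z b -> fconnect f a b || fconnect f b a.
Proof.
move=> /iter_findex <- /iter_findex <-.
case: (leqP (findex f z a) (findex f z b)) => [/subnK | /ltnW/subnK] <-;
  by rewrite iterD fconnect_iter ?orbT.
Qed.

Lemma card_bigcup_le (I T : finType) (A : {pred I}) (F : I -> {set T}) :
  #|\bigcup_(i in A) F i| <= \sum_(i in A) #|F i|.
Proof.
elim/big_rec2: _ => [|i U n _ IH]; first by rewrite cards0.
by apply: leq_trans (leq_card_setU _ _) _; rewrite leq_add2l.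
Qed.

Lemma card_pairs_le (I J : finType) (P : I -> J -> bool) (A : {set I}) (k : nat) :
  (forall x y, P x y -> x \in A) -> {in A, forall x, #|[set y | P x y]| <= k} ->
  #|[set p : I * J | P p.1 p.2]| <= #|A| * k.
Proof.
move=> PA Pk; rewrite -sum_nat_const.
have sub : [set p : I * J | P p.1 p.2] \subset
    \bigcup_(x in A) [set (x, y) | y in [set y | P x y]].
  apply/subsetP => -[x y]; rewrite inE /= => Pxy.
  by apply/bigcupP; exists x; [exact: PA Pxy | apply: imset_f; rewrite inE].
apply: leq_trans (subset_leq_card sub) (leq_trans (card_bigcup_le _ _) _).
apply: leq_sum => x Ax; rewrite card_imset; first exact: Pk.
by move=> y1 y2 [].
Qed.

Section RootedTree.
Variables (T : finType) (s : T) (par : T -> T) (rank : T -> nat).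
Hypothesis par_root : par s = s.
Hypothesis rank_par : forall v, v != s -> rank (par v) < rank v.

Lemma fconnect_rank x y : fconnect par x y -> rank y <= rank x.
Proof.
move=> /iter_findex <-; elim: (findex _ _ _) => //= n; set z := iter n par x.
have [-> | /rank_par/ltnW] := eqVneq z s; first by rewrite par_root.
exact: leq_trans.
Qed.

Lemma fconnect_root x : fconnect par x s.
Proof.
have [k] := ubnP (rank x); elim: k x => // k IH x /ltnSE lt_x.
have [-> | /rank_par lt_par] := eqVneq x s; first exact: connect0.
exact: connect_trans (fconnect1 par x) (IH _ (leq_trans lt_par lt_x)).
Qed.

Lemma fconnect_rootE y : fconnect par s y = (y == s).
Proof.
apply/idP/eqP => [/iter_findex <- | ->]; last exact: connect0.
by elim: (findex _ _ _) => //= n ->.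
Qed.

Lemma par_not_descendant c : c != s -> ~~ fconnect par (par c) c.
Proof. by move=> /rank_par; apply: contraTN => /fconnect_rank; rewrite leqNgt. Qed.

Definition ancestors u := [set a | fconnect par u a].

Lemma root_in_ancestors u : s \in ancestors u.
Proof. by rewrite inE fconnect_root. Qed.

Lemma card_ancestors_root : #|ancestors s| = 1.
Proof.
suff -> : ancestors s = [set s] by rewrite cards1.
by apply/setP => y; rewrite !inE fconnect_rootE.
Qed.

Lemma card_ancestors_par u : u != s -> #|ancestors u| = #|ancestors (par u)|.+1.
Proof.
move=> u_ns; have -> : ancestors u = u |: ancestors (par u).
  by apply/setP => y; rewrite !inE fconnect_eqVf eq_sym.
by rewrite cardsU1 inE par_not_descendant.
Qed.

Lemma subtree_par w : subtree par w \subset subtree par (par w).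
Proof.
by apply/subsetP => y; rewrite !inE => /connect_trans; apply; apply: fconnect1.
Qed.

Lemma subtree_child c p : child s par c p -> subtree par c \subset subtree par p.
Proof. by case/andP=> _ /eqP <-; apply: subtree_par. Qed.

Lemma sibling_fconnect c c' p : child s par c p -> child s par c' p ->
  fconnect par c c' -> c = c'.
Proof.
move=> /andP[_ /eqP pc] /andP[c'_ns /eqP pc']; rewrite fconnect_eqVf => /orP[/eqP // |].
by rewrite pc -pc' (negbTE (par_not_descendant c'_ns)).
Qed.

Lemma disjoint_subtree_children c c' p : child s par c p -> child s par c' p ->
  c != c' -> [disjoint subtree par c & subtree par c'].
Proof.
move=> cp c'p neq; apply/pred0P => z; rewrite /= !inE /anc.
apply/negP => /andP[zc zc']; apply: (negP neq).
case/orP: (fconnect_comparable zc zc') =>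
  [/(sibling_fconnect cp c'p) | /(sibling_fconnect c'p cp)] ->; exact: eqxx.
Qed.

Lemma Vx_root x : s \notin Vx par x.
Proof. by rewrite !inE /anc fconnect_rootE eq_sym andNb. Qed.

Lemma child_par w : w != s -> child s par w (par w).
Proof. by rewrite /child eqxx andbT. Qed.

Variable h : T -> T.
Hypothesis heavy : heavy_choice s par h.

Lemma light_subtree_half c p : child s par c p -> c != h p ->
  #|subtree par c|.*2 <= #|subtree par p|.
Proof.
move=> cp c_light; have [hp le_ch] := heavy cp.
rewrite -addnn; apply: leq_trans (leq_add (leqnn _) le_ch) _.
have [_] := leq_card_setU (subtree par c) (subtree par (h p)).
rewrite (disjoint_subtree_children cp hp c_light) => /eqP <-.
by apply: subset_leq_card; rewrite subUset !subtree_child.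
Qed.

Lemma LD_sub_Vx x : LD s par h x \subset Vx par x.
Proof.
apply/subsetP => v /bigcupP[c /andP[cx _]]; rewrite !inE /anc => vc.
have /andP[c_ns /eqP pc] := cx; apply/andP; split.
  by apply: contraNneq (par_not_descendant c_ns) => vx; rewrite pc -vx.
by rewrite -pc (connect_trans vc (fconnect1 _ _)).
Qed.

Definition light_ancestors v := [set x | v \in LD s par h x].

Lemma light_ancestors_root : light_ancestors s = set0.
Proof.
apply/setP => x; rewrite !inE; apply: contraNF (Vx_root x).
exact: subsetP (LD_sub_Vx x) s.
Qed.

Lemma notin_light_ancestors x : x \notin light_ancestors x.
Proof. by rewrite inE; apply/negP => /(subsetP (LD_sub_Vx x)); rewrite !inE eqxx. Qed.

Lemma light_ancestors_par w : w != s ->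
  light_ancestors w = if h (par w) == w then light_ancestors (par w)
                      else par w |: light_ancestors (par w).
Proof.
move=> w_ns.
have LD_par x : (w \in LD s par h x) =
    ((x == par w) && (h (par w) != w)) || (par w \in LD s par h x).
  apply/bigcupP/orP => [[c /andP[cx c_light]] | ].
    rewrite inE /anc fconnect_eqVf => /orP[/eqP wc | pwc].
      by left; move: cx c_light; rewrite -wc => /andP[_ /eqP <-]; rewrite eqxx eq_sym.
    by right; apply/bigcupP; exists c; rewrite ?inE ?cx.
  case=> [/andP[/eqP-> w_light] | /bigcupP[c cx pwc]].
    by exists w; rewrite ?(child_par w_ns) 1?eq_sym // inE /anc connect0.
  by exists c => //; move: pwc; rewrite !inE; apply: connect_trans (fconnect1 _ _).
apply/setP => x; rewrite inE LD_par.
by case: ifP; rewrite /= ?andbF ?andbT !inE.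
Qed.

Lemma light_ancestors_subtree w : 2 ^ #|light_ancestors w| * #|subtree par w| <= #|T|.
Proof.
have [k] := ubnP (rank w); elim: k w => // k IH w /ltnSE lt_w.
have [-> | w_ns] := eqVneq w s.
  by rewrite light_ancestors_root cards0 mul1n max_card.
have {}IH := IH _ (leq_trans (rank_par w_ns) lt_w).
rewrite light_ancestors_par //; case: eqP => [_ | w_light].
  by apply: leq_trans IH; rewrite leq_mul2l subset_leq_card ?orbT ?subtree_par.
rewrite cardsU1 notin_light_ancestors expnS -mulnA mulnCA; apply: leq_trans IH.
by rewrite leq_mul2l mul2n light_subtree_half ?child_par ?orbT // eq_sym; apply/eqP.
Qed.

Lemma card_light_ancestors v : #|light_ancestors v| <= trunc_log 2 #|T|.
Proof.
apply: trunc_log_max => //; apply: leq_trans (light_ancestors_subtree v).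
by rewrite leq_pmulr // card_gt0; apply/set0Pn; exists v; rewrite inE /anc connect0.
Qed.

Section BreadthFirst.
Variable adj : rel T.
Hypothesis adj_sym : symmetric adj.
Hypothesis rank_inj : injective rank.
Hypothesis rank_par_adj : forall v w, v != s -> adj v w -> rank (par v) <= rank w.
Hypothesis rank_par_mono : forall u w, u != s -> w != s ->
  rank (par u) < rank (par w) -> rank u < rank w.

(* Depth is monotone in discovery order: this is where the FIFO discipline of
   BFS enters. *)
Lemma card_ancestors_rank u w : rank u <= rank w -> #|ancestors u| <= #|ancestors w|.
Proof.
have [k] := ubnP (rank w); elim: k u w => // k IH u w /ltnSE lt_w le_uw.
have [-> | u_ns] := eqVneq u s.
  rewrite card_ancestors_root card_gt0; apply/set0Pn.
  by exists s; apply: root_in_ancestors.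
have [w_s | w_ns] := eqVneq w s.
  suff /rank_inj u_s : rank u = rank s by rewrite u_s eqxx in u_ns.
  by apply/eqP; rewrite eqn_leq -w_s le_uw w_s fconnect_rank ?fconnect_root.
rewrite (card_ancestors_par u_ns) (card_ancestors_par w_ns) ltnS.
apply: IH; first exact: leq_trans (rank_par w_ns) lt_w.
rewrite leqNgt; apply: contraTN le_uw => /(rank_par_mono w_ns u_ns).
by rewrite -ltnNge.
Qed.

Lemma card_ancestors_adj v w : adj v w -> #|ancestors v| <= #|ancestors w|.+1.
Proof.
move=> vw; have [-> | v_ns] := eqVneq v s; first by rewrite card_ancestors_root.
by rewrite (card_ancestors_par v_ns) ltnS card_ancestors_rank ?rank_par_adj.
Qed.

Lemma card_ancestors_within k b c :
  within adj k b c -> #|ancestors c| <= #|ancestors b| + k.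
Proof.
elim: k b => [|k IH] b /=; first by move/eqP->; rewrite addn0.
case/orP => [/eqP-> | /existsP[w /andP[bw /IH wc]]]; first exact: leq_addr.
by rewrite (leq_trans wc) // addnS -addSn leq_add2r card_ancestors_adj // adj_sym.
Qed.

Lemma card_ancestors_dist u : #|ancestors u| <= (dist adj s u).+1.
Proof.
apply: (big_ind (fun d => #|ancestors u| <= d.+1)).
- exact: leq_trans (max_card _) (leqnSn _).
- by move=> d1 d2; rewrite /minn; case: ifP.
- by move=> k /card_ancestors_within; rewrite card_ancestors_root add1n.
Qed.

Lemma card_ancestors_diameter u : #|ancestors u :\ s| <= diameter adj.
Proof.
have := card_ancestors_dist u; rewrite (cardsD1 s) root_in_ancestors ltnS.
move/leq_trans; apply.
exact: leq_trans (leq_bigmax (F := dist adj s) u)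
                 (leq_bigmax (F := fun x => \max_y dist adj x y) s).
Qed.

Lemma comp_sub_Vx x v : v \in Vx par x -> Defs.comp adj par x v \subset Vx par x.
Proof.
move=> vV; apply/subsetP => w; rewrite inE => /connectP[p].
case/lastP: p => [_ -> // | p z]; rewrite rcons_path last_rcons.
by case/andP=> _ /and3P[_ _ z_in] ->.
Qed.

Variable ec : T -> {set T} -> T * T.
Hypothesis ec_spec : edge_choice adj s par ec.

Lemma card_LDS_partners x v : v \in LD s par h x ->
  #|[set y | independent par x y && (v \in LDS adj s par h ec x y)]| <= diameter adj.
Proof.
move=> vx; have vV := subsetP (LD_sub_Vx x) v vx.
apply: leq_trans (card_ancestors_diameter (ec x (Defs.comp adj par x v)).1).
apply: subset_leq_card; apply/subsetP => y; rewrite !inE vx /= /on_pix /independent /anc.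
move=> /andP[/andP[not_xy not_yx] on_path].
have x_ns : x != s by apply: contraNneq not_xy => ->; apply: fconnect_root.
have /= [_ vC_in_C _] := ec_spec x_ns vV.
case/orP: on_path => [uy | /eqP y_vC].
  by rewrite uy andbT; apply: contraNneq not_yx => ->; apply: fconnect_root.
move: (subsetP (comp_sub_Vx vV) _ vC_in_C); rewrite -y_vC !inE => /andP[_].
by rewrite /anc (negbTE not_xy).
Qed.

Lemma LDS_count_le v : LDS_count adj s par h ec v <= #|light_ancestors v| * diameter adj.
Proof.
pose P x y := independent par x y && (v \in LDS adj s par h ec x y).
apply: (card_pairs_le (P := P)).
  by move=> x y /andP[_]; rewrite !inE => /andP[].
by move=> x; rewrite inE; apply: card_LDS_partners.
Qed.

End BreadthFirst.
End RootedTree.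

Theorem mainTheorem7 :
  exists c : nat,
  forall (T : finType) (adj : rel T) (s : T) (par h : T -> T)
         (ec : T -> {set T} -> T * T),
    simple_graph adj ->
    connected_graph adj ->
    no_cut_vertex adj ->
    bfs_tree adj s par ->
    heavy_choice s par h ->
    edge_choice adj s par ec ->
    forall v : T,
      LDS_count adj s par h ec v <= c * diameter adj * trunc_log 2 #|T|.
Proof.
exists 1 => T adj s par h ec [adj_sym _] _ _.
move=> [par_root [ord [ord_inj [ord_bfs ord_mono]]]] heavy ec_spec v.
have ord_par u : u != s -> ord (par u) < ord u by case/ord_bfs.
have ord_par_adj u w : u != s -> adj u w -> ord (par u) <= ord w.
  by case/ord_bfs=> _ _; apply.
rewrite mul1n mulnC.
apply: leq_trans (LDS_count_le par_root ord_par h adj_sym ord_inj ord_par_adj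
                                ord_mono ec_spec v) _.
by rewrite leq_mul2r (card_light_ancestors par_root ord_par heavy) orbT.
Qed.
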